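(* For every message $M$ and formulas $\phi,\psi$: $\vdash\mathsf{k}_{\mathsf{CM}}(M)\to\big([M](\phi\vee\psi)\to([M]\phi\vee[M]\psi)\big)$.
   Context: Fix a finite set $\mathcal{A}$ of agent names containing a distinguished name $\mathsf{CM}$. Messages: $M ::= a \mid B \mid (M,M)$ ($a\in\mathcal{A}$, $B$ optional data constants, pairs). $\mathcal{P}$ is a denumerable set of propositional variables containing atoms $\mathsf{k}_a(M)$ (''$a$ knows $M$''). Formulas: $\phi ::= P \mid \phi\wedge\phi \mid \phi\vee\phi \mid \neg\phi \mid \phi\to\phi \mid [M]\phi$. Abbreviations: $\mathrm{true}:=\mathsf{k}_{\mathsf{CM}}(\mathsf{CM})$, $\mathrm{false}:=\neg\mathrm{true}$, $\phi\leftrightarrow\psi:=(\phi\to\psi)\wedge(\psi\to\phi)$, $\langle M\rangle\phi:=\neg\neg(\mathsf{k}_{\mathsf{CM}}(M)\wedge\phi)$. LIiP is the smallest set of formulas containing all instances of: the axioms of an adequate Hilbert axiomatization of intuitionistic propositional logic; $\mathsf{k}_a(a)$; $(\mathsf{k}_a(M)\wedge\mathsf{k}_a(M'))\leftrightarrow\mathsf{k}_a((M,M'))$; $[M]\mathsf{k}_{\mathsf{CM}}(M)$; $[M](\phi\to\psi)\to([M]\phi\to[M]\psi)$; $[M]\phi\to(\mathsf{k}_{\mathsf{CM}}(M)\to\phi)$; $[M]\phi\to\langle M\rangle\phi$; $\phi\to[M]\phi$; and closed under modus ponens and the rule: if $\mathsf{k}_{\mathsf{CM}}(M)\to\mathsf{k}_{\mathsf{CM}}(M')$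 is in the set then so is $[M']\phi\to[M]\phi$ for every $\phi$. Write $\vdash\phi$ for $\phi\in\mathrm{LIiP}$. *)

From mathcomp Require Import all_boot.

Set Implicit Arguments.
Unset Strict Implicit.

Section LIiP.
(* A : the finite set of agent names; CM : the distinguished agent;
   B : the (countable) set of optional data constants. *)
Variables (A : finType) (CM : A) (B : countType).

Inductive msg : Type :=
  | MAgent : A -> msg
  | MData : B -> msg
  | MPair : msg -> msg -> msg.

Inductive pvar : Type :=
  | PK : A -> msg -> pvar
  | POther : nat -> pvar.

Inductive form : Type :=
  | FVar : pvar -> form
  | FAnd : form -> form -> form
  | FOr : form -> form -> form
  | FNot : form -> form
  | FImp : form -> form -> form
  | FBox : msg -> form -> form.

Definition Fk (a : A) (M : msg) : form := FVar (PK a M).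
Definition Ftrue : form := Fk CM (MAgent CM).
Definition Ffalse : form := FNot Ftrue.
Definition Fiff (p q : form) : form := FAnd (FImp p q) (FImp q p).
Definition Fdia (M : msg) (p : form) : form := FNot (FNot (FAnd (Fk CM M) p)).

(* LIiP as an inductive derivability predicate.  The intuitionistic base is
   Kleene's Hilbert system for intuitionistic propositional logic
   (with primitive negation) and modus ponens. *)
Inductive LIiP : form -> Prop :=
  | ax_K p q : LIiP (FImp p (FImp q p))
  | ax_S p q r : LIiP (FImp (FImp p (FImp q r)) (FImp (FImp p q) (FImp p r)))
  | ax_andE1 p q : LIiP (FImp (FAnd p q) p)
  | ax_andE2 p q : LIiP (FImp (FAnd p q) q)
  | ax_andI p q : LIiP (FImp p (FImp q (FAnd p q)))
  | ax_orI1 p q : LIiP (FImp p (FOr p q))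
  | ax_orI2 p q : LIiP (FImp q (FOr p q))
  | ax_orE p q r : LIiP (FImp (FImp p r) (FImp (FImp q r) (FImp (FOr p q) r)))
  | ax_negI p q : LIiP (FImp (FImp p q) (FImp (FImp p (FNot q)) (FNot p)))
  | ax_negE p q : LIiP (FImp (FNot p) (FImp p q))
  | ax_kself a : LIiP (Fk a (MAgent a))
  | ax_kpair a M M' : LIiP (Fiff (FAnd (Fk a M) (Fk a M')) (Fk a (MPair M M')))
  | ax_boxk M : LIiP (FBox M (Fk CM M))
  | ax_boxK M p q : LIiP (FImp (FBox M (FImp p q)) (FImp (FBox M p) (FBox M q)))
  | ax_boxT M p : LIiP (FImp (FBox M p) (FImp (Fk CM M) p))
  | ax_boxD M p : LIiP (FImp (FBox M p) (Fdia M p))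
  | ax_boxI M p : LIiP (FImp p (FBox M p))
  | r_MP p q : LIiP (FImp p q) -> LIiP p -> LIiP q
  | r_mono M M' p : LIiP (FImp (Fk CM M) (Fk CM M')) ->
                    LIiP (FImp (FBox M' p) (FBox M p)).

End LIiP.

From mathcomp Require Import all_boot.

(* Proof idea: by the T-axiom, [M](phi \/ psi) together with k_CM(M) yields
   phi \/ psi, and each disjunct is boxed again by the axiom phi -> [M]phi. *)

Set Implicit Arguments.
Unset Strict Implicit.

Section Derivations.
Variables (A : finType) (CM : A) (B : countType).
Notation derivable := (LIiP CM).

Lemma imp_postcompose (p q r : form A B) :
  derivable (FImp q r) -> derivable (FImp (FImp p q) (FImp p r)).
Proof.
move=> hqr; apply: (r_MP (ax_S CM p q r)).
exact: r_MP (ax_K CM (FImp q r) p) hqr.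
Qed.

Lemma imp_trans (p q r : form A B) :
  derivable (FImp p q) -> derivable (FImp q r) -> derivable (FImp p r).
Proof. by move=> hpq hqr; exact: r_MP (imp_postcompose p hqr) hpq. Qed.

Lemma imp_swap (p q r : form A B) :
  derivable (FImp p (FImp q r)) -> derivable (FImp q (FImp p r)).
Proof.
move=> hpqr; apply: (imp_trans (ax_K CM q p)).
exact: r_MP (ax_S CM p q r) hpqr.
Qed.

Lemma or_imp (p q r : form A B) :
  derivable (FImp p r) -> derivable (FImp q r) -> derivable (FImp (FOr p q) r).
Proof. by move=> hpr hqr; exact: r_MP (r_MP (ax_orE CM p q r) hpr) hqr. Qed.

Lemma or_imp_or_box (M : msg A B) (phi psi : form A B) :
  derivable (FImp (FOr phi psi) (FOr (FBox M phi) (FBox M psi))).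
Proof.
apply: or_imp.
- exact: imp_trans (ax_boxI CM M phi) (ax_orI1 CM _ _).
- exact: imp_trans (ax_boxI CM M psi) (ax_orI2 CM _ _).
Qed.

End Derivations.

Theorem theorem2p40 (A : finType) (CM : A) (B : countType)
    (M : msg A B) (phi psi : form A B) :
  LIiP CM (FImp (Fk CM M)
                (FImp (FBox M (FOr phi psi)) (FOr (FBox M phi) (FBox M psi)))).
Proof.
apply: imp_swap; apply: imp_trans (ax_boxT CM M (FOr phi psi)) _.
exact/imp_postcompose/or_imp_or_box.
Qed.
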